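(* Let $\sigma>0$ and $h:[0,\sigma)\to\mathbb{R}^+$ be continuous, strictly increasing, with $\lim_{s\to\sigma^-}h(s)=+\infty$, and suppose there exists $\gamma\in[1,2)$ with $\lim_{s\to\sigma^-}(\sigma-s)^\gamma h(s)=C>0$. Let $H(s)=\int_0^s h(t)\,dt$, $\psi(s)=\int_0^s e^{-H(t)}\,dt$ for $s\in[0,\sigma]$, $L=\psi(\sigma)$ (so $\psi:[0,\sigma]\to[0,L]$ is increasing and invertible), and $g(s)=e^{-H(\psi^{-1}(s))}$ for $s\in[0,L]$ (with $g(L)=0$). Then: (i) $g(0)=1$ and $g(L)=0$; (ii) $g$ is decreasing; (iii) $\lim_{s\to L^-}g'(s)=-\infty$; (iv) $\displaystyle\int_0^L\frac{dt}{\sqrt{\int_t^L g(s)\,ds}}<+\infty.$ *)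

From Stdlib Require Import Reals Lra ClassicalEpsilon.
From Coquelicot Require Import Coquelicot.
Open Scope R_scope.

Definition Hf (h : R -> R) (s : R) : R := RInt h 0 s.

(* e^{-H(t)} for t < sigma, and 0 at t >= sigma (convention e^{-H(sigma)} = 0,
   since H(s) -> +oo as s -> sigma^-). *)
Definition Ef (h : R -> R) (sigma t : R) : R :=
  if Rlt_dec t sigma then exp (- Hf h t) else 0.

Definition psi (h : R -> R) (sigma s : R) : R := RInt (Ef h sigma) 0 s.

Definition Lval (h : R -> R) (sigma : R) : R := psi h sigma sigma.

Definition psi_inv (h : R -> R) (sigma s : R) : R :=
  epsilon (inhabits 0) (fun t => 0 <= t <= sigma /\ psi h sigma t = s).

Definition gf (h : R -> R) (sigma s : R) : R := Ef h sigma (psi_inv h sigma s).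

(* [g] is [e^{-H}] read in the variable [t = psi(tau)]; since
   [dt = e^{-H(tau)} dtau], one gets [g' = - h o psi^{-1}], and (i)-(iii) follow from
   [H(sigma^-) = +oo] (a consequence of [h(s) >= C / (2 (sigma - s))] near [sigma], as
   [gamma >= 1]) and from [h(sigma^-) = +oo].
   For (iv), take [tau] near [sigma] and [t = psi(tau)].  On the step
   [[tau, tau + c (sigma - tau)^gamma]] the asymptotics give [h <= 8C (sigma - tau)^-gamma],
   so [H] grows by at most 1 there and [g >= e^{-1} e^{-H(tau)}] on the corresponding
   [t]-interval, whose length is at least [c (sigma - tau)^gamma e^{-1} e^{-H(tau)}].  Hence
   [1 / sqrt (int_t^L g) <= K (sigma - tau)^{-gamma/2} e^{H(tau)}], which is a constant
   times the [t]-derivative of [-(sigma - psi^{-1}(t))^{1 - gamma/2}].  As [gamma < 2] this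
   primitive is bounded, so the nonnegative integrand has a convergent improper integral. *)

From Stdlib Require Import Reals Ranalysis5 Lra Classical ClassicalEpsilon.
From Coquelicot Require Import Coquelicot.
Open Scope R_scope.

Lemma locally_open_interval (a b x : R) : a < x < b -> locally x (fun y => a < y < b).
Proof.
  intros Hx; assert (Hr : 0 < Rmin (x - a) (b - x)) by (apply Rmin_pos; lra).
  exists (mkposreal _ Hr); intros y Hy.
  change (Rabs (y - x) < Rmin (x - a) (b - x)) in Hy; apply Rabs_def2 in Hy.
  pose proof (Rmin_l (x - a) (b - x)); pose proof (Rmin_r (x - a) (b - x)); lra.
Qed.

(* Composing with [clamp a b] turns continuity on [a, b] into continuity on the whole
   line, which is what [ex_RInt_continuous] and [IVT_gen_consistent] require. *)
Definition clamp (a b x : R) : R := Rmax a (Rmin b x).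

Lemma clamp_in (a b x : R) : a <= b -> a <= clamp a b x <= b.
Proof.
  intros Hab; unfold clamp; split; [apply Rmax_l|].
  apply Rmax_lub; [exact Hab | apply Rmin_l].
Qed.

Lemma clamp_id (a b x : R) : a <= x <= b -> clamp a b x = x.
Proof. intros Hx; unfold clamp; rewrite Rmin_right, Rmax_right; lra. Qed.

Lemma clamp_lipschitz (a b x y : R) :
  Rabs (clamp a b x - clamp a b y) <= 1 * Rabs (x - y).
Proof.
  unfold clamp, Rmax, Rmin.
  repeat destruct Rle_dec; unfold Rabs; repeat destruct Rcase_abs; lra.
Qed.

Lemma continuous_on_lipschitz (D : R -> Prop) (f : R -> R) (K : R) :
  (forall x y, D x -> D y -> Rabs (f x - f y) <= K * Rabs (x - y)) ->
  continuous_on D f.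
Proof.
  intros Hlip x Dx P [eps HP].
  assert (Hd : 0 < eps / (Rabs K + 1)).
  { apply Rdiv_lt_0_compat; [apply cond_pos | pose proof (Rabs_pos K); lra]. }
  exists (mkposreal _ Hd); intros y Hy Dy; apply HP; change (Rabs (f y - f x) < eps).
  apply Rle_lt_trans with (K * Rabs (y - x)); [now apply Hlip|].
  pose proof (Rabs_pos (y - x)); pose proof (Rle_abs K); pose proof (Rabs_pos K).
  apply Rle_lt_trans with ((Rabs K + 1) * Rabs (y - x)); [nra|].
  replace (pos eps) with ((Rabs K + 1) * (eps / (Rabs K + 1))) by (field; lra).
  apply Rmult_lt_compat_l; [lra | exact Hy].
Qed.

Lemma continuous_on_comp (D D' : R -> Prop) (f g : R -> R) :
  (forall x, D x -> D' (f x)) -> continuous_on D f -> continuous_on D' g ->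
  continuous_on D (fun x => g (f x)).
Proof.
  intros Hmaps Cf Cg x Dx.
  apply filterlim_comp with (within D' (locally (f x))); [|now apply Cg, Hmaps].
  intros P HP; specialize (Cf x Dx _ HP).
  unfold filtermap.
  apply (filter_imp (F := within D (locally x)) (fun y => D y /\ (D' (f y) -> P (f y)))).
  - intros y [Dy Hy]; auto.
  - apply filter_and; [apply (filter_forall (F := locally x)); auto | exact Cf].
Qed.

Lemma filterlim_within_continuous_on (D' D : R -> Prop) (f : R -> R) (x : R) :
  D' x -> continuous_on D' f -> locally x (fun y => D y -> D' y) ->
  filterlim f (within D (locally x)) (locally (f x)).
Proof.
  intros Dx Cf Hloc P HP; specialize (Cf x Dx P HP).
  apply (filter_imp (F := locally x) (fun y => (D y -> D' y) /\ (D' y -> P (f y)))).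
  - intros y [HD HP'] Dy; auto.
  - now apply filter_and.
Qed.

Lemma continuous_clamp_comp (f : R -> R) (a b x : R) :
  a <= b -> continuous_on (fun t => a <= t <= b) f ->
  continuous (fun t => f (clamp a b t)) x.
Proof.
  intros Hab Cf.
  apply (continuous_continuous_on (fun _ => True)); [now apply filter_forall|].
  apply continuous_on_comp with (fun t => a <= t <= b); auto.
  - intros t _; now apply clamp_in.
  - apply continuous_on_lipschitz with 1; intros; apply clamp_lipschitz.
Qed.

Lemma ex_RInt_continuous_on (f : R -> R) (a b : R) :
  a <= b -> continuous_on (fun t => a <= t <= b) f -> ex_RInt f a b.
Proof.
  intros Hab Cf.
  apply ex_RInt_ext with (fun t => f (clamp a b t)).
  - intros t Ht; rewrite Rmin_left, Rmax_right in Ht by lra.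
    rewrite clamp_id; lra.
  - apply (@ex_RInt_continuous R_CompleteNormedModule); intros z _; now apply continuous_clamp_comp.
Qed.

Lemma continuous_on_RInt (f : R -> R) (a b M : R) :
  (forall x, a <= x <= b -> ex_RInt f a x) ->
  (forall t, a <= t <= b -> Rabs (f t) <= M) ->
  continuous_on (fun x => a <= x <= b) (fun x => RInt f a x).
Proof.
  intros Hex Hbnd; apply continuous_on_lipschitz with M.
  assert (Hsub : forall x y, a <= x <= y -> y <= b ->
    Rabs (RInt f a y - RInt f a x) <= M * Rabs (y - x)).
  { intros x y Hxy Hy.
    assert (Hxy' : ex_RInt f x y)
      by (apply (@ex_RInt_Chasles_2 R_CompleteNormedModule) with a; [lra | apply Hex; lra]).
    rewrite <- (@RInt_Chasles R_CompleteNormedModule f a x y (Hex x ltac:(lra)) Hxy').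
    change (plus (RInt f a x) (RInt f x y)) with (RInt f a x + RInt f x y).
    rewrite Rplus_minus_l.
    rewrite (Rabs_right (y - x)), Rmult_comm by lra.
    apply abs_RInt_le_const; [lra | exact Hxy' | intros; apply Hbnd; lra]. }
  intros x y Hx Hy; destruct (Rle_dec y x).
  - now apply Hsub.
  - rewrite <- Rabs_Ropp, Ropp_minus_distr, <- (Rabs_Ropp (x - y)), Ropp_minus_distr.
    apply Hsub; lra.
Qed.

Lemma IVT_continuous_on (f : R -> R) (a b y : R) :
  a <= b -> continuous_on (fun t => a <= t <= b) f -> f a <= y <= f b ->
  exists x, a <= x <= b /\ f x = y.
Proof.
  intros Hab Cf Hy.
  destruct (IVT_gen_consistent (fun t => f (clamp a b t)) a b y) as [x [Hx Hfx]].
  - intros z; now apply continuous_clamp_comp.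
  - rewrite !clamp_id by lra.
    rewrite Rmin_left, Rmax_right; lra.
  - rewrite Rmin_left, Rmax_right in Hx by lra.
    rewrite clamp_id in Hfx by lra; now exists x.
Qed.

Lemma filterlim_within_at_right (f : R -> R) (D : R -> Prop) (a : R) :
  (forall x, D x -> a <= x) -> filterlim f (at_right a) (locally (f a)) ->
  filterlim f (within D (locally a)) (locally (f a)).
Proof.
  intros HD Hf P HP; specialize (Hf P HP).
  apply (filter_imp (F := locally a) (fun x => a < x -> P (f x))); [|exact Hf].
  intros x Hx Dx; destruct (Rle_lt_or_eq_dec a x (HD x Dx)) as [Hlt | <-]; auto.
  now apply locally_singleton.
Qed.

Lemma filterlim_within_at_left (f : R -> R) (D : R -> Prop) (b : R) :
  (forall x, D x -> x <= b) -> filterlim f (at_left b) (locally (f b)) ->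
  filterlim f (within D (locally b)) (locally (f b)).
Proof.
  intros HD Hf P HP; specialize (Hf P HP).
  apply (filter_imp (F := locally b) (fun x => x < b -> P (f x))); [|exact Hf].
  intros x Hx Dx; destruct (Rle_lt_or_eq_dec x b (HD x Dx)) as [Hlt | ->]; auto.
  now apply locally_singleton.
Qed.
Lemma increasing_inverse_lt (f g : R -> R) (a b y v : R) :
  (forall x y, a <= x -> x < y -> y <= b -> f x < f y) ->
  (forall y, f a <= y <= f b -> a <= g y <= b /\ f (g y) = y) ->
  f a <= y <= f b -> a <= v <= b ->
  (y < f v -> g y < v) /\ (f v < y -> v < g y).
Proof.
  intros Hf Hg Hy Hv; destruct (Hg y Hy) as [Hgy Hfgy].
  split; intros Hlt;
    destruct (Rtotal_order (g y) v) as [Hgv | [Hgv | Hgv]]; subst; try lra;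
    [pose proof (Hf v (g y)) | pose proof (Hf (g y) v)]; lra.
Qed.

Lemma continuous_on_increasing_inverse (f g : R -> R) (a b : R) :
  (forall x y, a <= x -> x < y -> y <= b -> f x < f y) ->
  (forall y, f a <= y <= f b -> a <= g y <= b /\ f (g y) = y) ->
  continuous_on (fun y => f a <= y <= f b) g.
Proof.
  intros Hf Hg z Hz P [eps HP].
  pose proof (cond_pos eps) as Heps.
  destruct (Hg z Hz) as [Hgz Hfgz].
  assert (Hup : exists d, 0 < d /\ forall y, f a <= y <= f b -> y - z < d -> g y < g z + eps).
  { destruct (Rlt_or_le (g z) b) as [Hlt|Hge].
    - set (v := Rmin b (g z + eps / 2)).
      assert (Hv : g z < v <= b /\ v <= g z + eps / 2).
      { split; [split|]; [apply Rmin_glb_lt; lra | apply Rmin_l | apply Rmin_r]. }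
      exists (f v - z); split.
      + pose proof (Hf (g z) v ltac:(lra) ltac:(lra) ltac:(lra)); lra.
      + intros y Hy Hyz.
        pose proof (proj1 (increasing_inverse_lt f g a b y v Hf Hg Hy ltac:(lra)) ltac:(lra)).
        lra.
    - exists 1; split; [lra|]; intros y Hy _; destruct (Hg y Hy); lra. }
  assert (Hdown : exists d, 0 < d /\ forall y, f a <= y <= f b -> z - y < d -> g z - eps < g y).
  { destruct (Rlt_or_le a (g z)) as [Hlt|Hge].
    - set (w := Rmax a (g z - eps / 2)).
      assert (Hw : a <= w < g z /\ g z - eps / 2 <= w).
      { split; [split|]; [apply Rmax_l | apply Rmax_lub_lt; lra | apply Rmax_r]. }
      exists (z - f w); split.
      + pose proof (Hf w (g z) ltac:(lra) ltac:(lra) ltac:(lra)); lra.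
      + intros y Hy Hyz.
        pose proof (proj2 (increasing_inverse_lt f g a b y w Hf Hg Hy ltac:(lra)) ltac:(lra)).
        lra.
    - exists 1; split; [lra|]; intros y Hy _; destruct (Hg y Hy); lra. }
  destruct Hup as [du [Hdu Hup]]; destruct Hdown as [dd [Hdd Hdown]].
  exists (mkposreal _ (Rmin_pos _ _ Hdu Hdd)); intros y Hyz Hy.
  apply HP; change (Rabs (g y - g z) < eps).
  change (Rabs (y - z) < Rmin du dd) in Hyz; apply Rabs_def2 in Hyz.
  pose proof (Rmin_l du dd); pose proof (Rmin_r du dd).
  pose proof (Hup y Hy ltac:(lra)); pose proof (Hdown y Hy ltac:(lra)).
  apply Rabs_def1; lra.
Qed.

Lemma is_derive_inverse (f g : R -> R) (a b y l : R) :
  a < y < b -> g a <= g y <= g b ->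
  (forall x, a <= x <= b -> f (g x) = x) ->
  (forall t, g a <= t <= g b -> ex_derive f t) ->
  continuous g y -> is_derive f (g y) l -> l <> 0 ->
  is_derive g y (/ l).
Proof.
  intros Hy Hgy Hfg Hdf Hg Hl Hl0.
  set (Prf := fun t (Ht : g a <= t <= g b) => ex_derive_Reals_0 f t (Hdf t Ht)).
  assert (Hd : derive_pt f (g y) (Prf (g y) Hgy) = l).
  { rewrite Derive_Reals; now apply is_derive_unique. }
  apply is_derive_Reals; rewrite <- Hd, <- (Rdiv_1_l (derive_pt _ _ _)).
  apply (derivable_pt_lim_recip_interv f g a b y Prf); try lra.
  - now apply continuity_pt_filterlim.
  - exact Hfg.
Qed.

Lemma RInt_ge_const (f : R -> R) (a b c : R) :
  a <= b -> ex_RInt f a b -> (forall x, a < x < b -> c <= f x) ->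
  c * (b - a) <= RInt f a b.
Proof.
  intros Hab Hf Hc.
  replace (c * (b - a)) with (RInt (fun _ => c) a b)
    by (rewrite RInt_const; unfold scal; simpl; unfold mult; simpl; ring).
  apply RInt_le; auto; apply ex_RInt_const.
Qed.

Lemma RInt_le_const (f : R -> R) (a b c : R) :
  a <= b -> ex_RInt f a b -> (forall x, a < x < b -> f x <= c) ->
  RInt f a b <= c * (b - a).
Proof.
  intros Hab Hf Hc.
  replace (c * (b - a)) with (RInt (fun _ => c) a b)
    by (rewrite RInt_const; unfold scal; simpl; unfold mult; simpl; ring).
  apply RInt_le; auto; apply ex_RInt_const.
Qed.

Lemma is_derive_RInt_inside (f : R -> R) (a c d x : R) :
  c < x < d -> (forall y, c < y < d -> ex_RInt f a y) -> continuous f x ->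
  is_derive (fun y => RInt f a y) x (f x).
Proof.
  intros Hx Hf Hfx; apply is_derive_RInt with a; [|exact Hfx].
  apply filter_imp with (2 := locally_open_interval c d x Hx); intros y Hy.
  apply (@RInt_correct R_CompleteNormedModule), Hf, Hy.
Qed.

Lemma RInt_le_of_is_derive (f F dF : R -> R) (c d a b : R) :
  c < a -> a <= b -> b < d ->
  (forall x, c < x < d -> continuous f x) ->
  (forall x, c < x < d -> is_derive F x (dF x)) ->
  (forall x, a <= x <= b -> f x <= dF x) ->
  RInt f a b <= F b - F a.
Proof.
  intros Hca Hab Hbd Hf HF Hle.
  assert (Hex : forall y, c < y < d -> ex_RInt f a y).
  { intros y Hy; apply (@ex_RInt_continuous R_CompleteNormedModule).
    intros z Hz; apply Hf; split.
    - apply Rlt_le_trans with (Rmin a y); [apply Rmin_glb_lt | apply Hz]; lra.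
    - apply Rle_lt_trans with (Rmax a y); [apply Hz | apply Rmax_lub_lt]; lra. }
  set (G := fun x => F x - RInt f a x).
  assert (HG : forall x, c < x < d -> is_derive G x (dF x - f x)).
  { intros x Hx; apply (@is_derive_minus R_AbsRing R_NormedModule); [now apply HF|].
    apply is_derive_RInt_inside with c d; auto. }
  destruct (MVT_gen G a b (fun x => dF x - f x)) as [x0 [Hx0 HMVT]].
  - intros x Hx; rewrite Rmin_left, Rmax_right in Hx by lra; apply HG; lra.
  - intros x Hx; rewrite Rmin_left, Rmax_right in Hx by lra.
    apply continuity_pt_filterlim, (@ex_derive_continuous R_AbsRing R_NormedModule).
    eexists; apply HG; lra.
  - rewrite Rmin_left, Rmax_right in Hx0 by lra.
    assert (Hpt : RInt f a a = 0) by (rewrite RInt_point; reflexivity).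
    unfold G in HMVT; rewrite Hpt in HMVT; pose proof (Hle x0 Hx0); nra.
Qed.

Lemma ex_RInt_gen_at_left_of_bounded (f : R -> R) (a b M : R) :
  a < b ->
  (forall x, a <= x < b -> ex_RInt f a x) ->
  (forall x, a <= x < b -> 0 <= f x) ->
  (forall x, a <= x < b -> RInt f a x <= M) ->
  ex_RInt_gen f (at_point a) (at_left b).
Proof.
  intros Hab Hex Hpos Hbnd.
  assert (Hmono : forall x y, a <= x <= y -> y < b -> RInt f a x <= RInt f a y).
  { intros x y Hxy Hy.
    assert (Hxy' : ex_RInt f x y)
      by (apply (@ex_RInt_Chasles_2 R_CompleteNormedModule) with a; [lra | apply Hex; lra]).
    rewrite <- (@RInt_Chasles R_CompleteNormedModule f a x y (Hex x ltac:(lra)) Hxy').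
    assert (0 <= RInt f x y) by (apply RInt_ge_0; [lra | exact Hxy' | intros; apply Hpos; lra]).
    change (plus (RInt f a x) (RInt f x y)) with (RInt f a x + RInt f x y); lra. }
  set (S := fun v => exists x, a <= x < b /\ v = RInt f a x).
  destruct (completeness S) as [l [Hub Hlub]].
  - exists M; intros v [x [Hx ->]]; now apply Hbnd.
  - exists (RInt f a a), a; split; [lra | reflexivity].
  - exists l; apply filterlimi_locally; intros eps.
    assert (Happrox : exists x0, a <= x0 < b /\ l - eps < RInt f a x0).
    { apply NNPP; intros Hno.
      assert (l <= l - eps); [|pose proof (cond_pos eps); lra].
      apply Hlub; intros v [x [Hx ->]].
      apply Rnot_lt_le; intros Hlt; apply Hno; now exists x. }
    destruct Happrox as [x0 [Hx0 Hl]].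
    apply Filter_prod with (fun x => x = a) (fun y => x0 <= y < b); [reflexivity| |].
    + assert (Hr : 0 < b - x0) by lra.
      exists (mkposreal _ Hr); intros y Hy Hyb.
      change (Rabs (y - b) < b - x0) in Hy; apply Rabs_def2 in Hy; lra.
    + intros x y -> Hy; exists (RInt f a y); split.
      * apply (@RInt_correct R_CompleteNormedModule), Hex; lra.
      * assert (RInt f a y <= l) by (apply Hub; exists y; split; [lra | reflexivity]).
        pose proof (Hmono x0 y ltac:(lra) ltac:(lra)).
        change (Rabs (RInt f a y - l) < eps); apply Rabs_def1; lra.
Qed.

Lemma exp_le_compat (x y : R) : x <= y -> exp x <= exp y.
Proof. intros [Hlt | ->]; [left; now apply exp_increasing | right; reflexivity]. Qed.

Lemma Rpower_le_base (u gamma : R) : 0 < u <= 1 -> 1 <= gamma -> Rpower u gamma <= u.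
Proof.
  intros Hu Hg; unfold Rpower; rewrite <- (exp_ln u) at 2 by lra.
  apply exp_le_compat; assert (ln u <= 0) by (rewrite <- ln_1; apply ln_le; lra); nra.
Qed.

Lemma Rpower_double_le (v gamma : R) : 0 < v -> gamma <= 2 ->
  Rpower (2 * v) gamma <= 4 * Rpower v gamma.
Proof.
  intros Hv Hg; rewrite <- Rpower_mult_distr by lra.
  apply Rmult_le_compat_r; [left; apply exp_pos|].
  replace 4 with (Rpower 2 (INR 2)) by (rewrite Rpower_pow by lra; simpl; ring).
  apply Rle_Rpower; simpl; lra.
Qed.

Section Profile.

Variables (sigma : R) (h : R -> R).
Hypothesis sigma_pos : 0 < sigma.
Hypothesis h_nonneg : forall s, 0 <= s < sigma -> 0 <= h s.
Hypothesis h_right_cont_0 : filterlim h (at_right 0) (locally (h 0)).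
Hypothesis h_cont : forall s, 0 < s < sigma -> continuous h s.
Hypothesis h_incr : forall s t, 0 <= s -> s < t -> t < sigma -> h s < h t.

Lemma h_pos s : 0 < s < sigma -> 0 < h s.
Proof. intros Hs; apply Rle_lt_trans with (h 0); [apply h_nonneg | apply h_incr]; lra. Qed.

Lemma h_le_compat s t : 0 <= s <= t -> t < sigma -> h s <= h t.
Proof.
  intros Hst Ht; destruct (Req_dec s t) as [->|]; [lra|].
  left; apply h_incr; lra.
Qed.

Lemma h_continuous_on b : b < sigma -> continuous_on (fun s => 0 <= s <= b) h.
Proof.
  intros Hb x Hx; destruct (Req_dec x 0) as [->|Hx0].
  - apply filterlim_within_at_right; [intros; lra | exact h_right_cont_0].
  - apply (filterlim_filter_le_1 (F := locally x)); [apply filter_le_within|].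
    apply h_cont; lra.
Qed.

Lemma ex_RInt_h a b : 0 <= a <= b -> b < sigma -> ex_RInt h a b.
Proof.
  intros Hab Hb; apply ex_RInt_continuous_on; [lra|].
  apply continuous_on_subset with (fun s => 0 <= s <= b); [intros; lra|].
  now apply h_continuous_on.
Qed.

Lemma Hf_0 : Hf h 0 = 0.
Proof. unfold Hf; rewrite RInt_point; reflexivity. Qed.

Lemma Hf_sub a b : 0 <= a <= b -> b < sigma -> Hf h b - Hf h a = RInt h a b.
Proof.
  intros Hab Hb; unfold Hf.
  rewrite <- (@RInt_Chasles R_CompleteNormedModule h 0 a b); [|apply ex_RInt_h; lra..].
  change (plus (RInt h 0 a) (RInt h a b)) with (RInt h 0 a + RInt h a b); ring.
Qed.

Lemma Hf_le_compat a b : 0 <= a <= b -> b < sigma -> Hf h a <= Hf h b.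
Proof.
  intros Hab Hb; pose proof (Hf_sub a b Hab Hb).
  assert (0 <= RInt h a b); [|lra].
  apply RInt_ge_0; [lra | apply ex_RInt_h; lra | intros; apply h_nonneg; lra].
Qed.

Lemma Hf_increasing a b : 0 <= a < b -> b < sigma -> Hf h a < Hf h b.
Proof.
  intros Hab Hb; set (m := (a + b) / 2).
  assert (Hm : h m * (b - m) <= Hf h b - Hf h m).
  { rewrite Hf_sub by (unfold m; lra).
    apply RInt_ge_const; [unfold m; lra | apply ex_RInt_h; unfold m; lra|].
    intros x Hx; apply h_le_compat; unfold m in *; lra. }
  pose proof (Hf_le_compat a m ltac:(unfold m; lra) ltac:(unfold m; lra)).
  pose proof (h_pos m ltac:(unfold m; lra)).
  assert (0 < h m * (b - m)) by (apply Rmult_lt_0_compat; unfold m in *; lra).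
  lra.
Qed.

Lemma Hf_continuous_on b : b < sigma -> continuous_on (fun s => 0 <= s <= b) (Hf h).
Proof.
  intros Hb; apply continuous_on_RInt with (h b); [intros; apply ex_RInt_h; lra|].
  intros t Ht; rewrite Rabs_right by (apply Rle_ge, h_nonneg; lra).
  apply h_le_compat; lra.
Qed.

Lemma is_derive_Hf s : 0 < s < sigma -> is_derive (Hf h) s (h s).
Proof.
  intros Hs; apply is_derive_RInt_inside with 0 sigma; [exact Hs| |now apply h_cont].
  intros y Hy; apply ex_RInt_h; lra.
Qed.

Hypothesis h_blow : filterlim h (at_left sigma) (Rbar_locally p_infty).

Variables (gamma C : R).
Hypothesis gamma_range : 1 <= gamma < 2.
Hypothesis C_pos : 0 < C.
Hypothesis h_asymp :
  filterlim (fun s => Rpower (sigma - s) gamma * h s) (at_left sigma) (locally C).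

Lemma h_asymp_bounds : exists t1, 0 < t1 < sigma /\ sigma - t1 <= 1 /\
  forall s, t1 <= s < sigma -> C / 2 <= Rpower (sigma - s) gamma * h s <= 2 * C.
Proof.
  assert (HC2 : 0 < C / 2) by lra.
  destruct (proj1 (filterlim_locally _ _) h_asymp (mkposreal _ HC2)) as [d Hd].
  pose proof (cond_pos d).
  pose proof (Rmax_l (sigma - d / 2) (Rmax (sigma - 1) (sigma / 2))).
  pose proof (Rmax_r (sigma - d / 2) (Rmax (sigma - 1) (sigma / 2))).
  pose proof (Rmax_l (sigma - 1) (sigma / 2)); pose proof (Rmax_r (sigma - 1) (sigma / 2)).
  assert (Rmax (sigma - d / 2) (Rmax (sigma - 1) (sigma / 2)) < sigma)
    by (apply Rmax_lub_lt; [|apply Rmax_lub_lt]; lra).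
  exists (Rmax (sigma - d / 2) (Rmax (sigma - 1) (sigma / 2))); split; [lra|split; [lra|]].
  intros s Hs.
  assert (Hball : ball sigma d s)
    by (change (Rabs (s - sigma) < d); rewrite Rabs_left; lra).
  specialize (Hd s Hball (proj2 Hs)).
  change (Rabs (Rpower (sigma - s) gamma * h s - C) < C / 2) in Hd.
  apply Rabs_def2 in Hd; lra.
Qed.

Lemma Hf_log_lower_bound : exists t1, 0 < t1 < sigma /\ forall s, t1 <= s < sigma ->
  Hf h t1 + C / 2 * (ln (sigma - t1) - ln (sigma - s)) <= Hf h s.
Proof.
  destruct h_asymp_bounds as [t1 [Ht1 [Ht1_1 Hbounds]]].
  exists t1; split; [exact Ht1|]; intros s Hs.
  assert (Hex : C / 2 * (ln (sigma - t1) - ln (sigma - s)) <= RInt h t1 s);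
    [|rewrite <- Hf_sub in Hex by lra; lra].
  set (F := fun t => - (C / 2) * ln (sigma - t)).
  assert (HF : is_RInt (fun t => C / (2 * (sigma - t))) t1 s (minus (F s) (F t1))).
  { apply (@is_RInt_derive R_CompleteNormedModule F); intros x Hx;
      rewrite Rmin_left, Rmax_right in Hx by lra.
    - unfold F; auto_derive; [lra | field; lra].
    - apply (@ex_derive_continuous R_AbsRing R_NormedModule); auto_derive; lra. }
  replace (C / 2 * (ln (sigma - t1) - ln (sigma - s))) with (minus (F s) (F t1))
    by (unfold F, minus, plus, opp; simpl; ring).
  rewrite <- (is_RInt_unique _ _ _ _ HF).
  apply RInt_le; [lra | eexists; exact HF | apply ex_RInt_h; lra|].
  intros x Hx; destruct (Hbounds x ltac:(lra)) as [Hlow _].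
  pose proof (Rpower_le_base (sigma - x) gamma ltac:(lra) (proj1 gamma_range)).
  assert (0 < Rpower (sigma - x) gamma) by apply exp_pos.
  apply Rmult_le_reg_l with (2 * (sigma - x)); [lra|].
  replace (2 * (sigma - x) * (C / (2 * (sigma - x)))) with C by (field; lra).
  nra.
Qed.

Lemma Hf_tends_to_infinity : filterlim (Hf h) (at_left sigma) (Rbar_locally p_infty).
Proof.
  destruct Hf_log_lower_bound as [t1 [Ht1 Hlog]].
  intros P [M HM].
  set (lam := ln (sigma - t1) - 2 / C * (M - Hf h t1)).
  assert (Hd : 0 < Rmin (exp lam) (sigma - t1)) by (apply Rmin_pos; [apply exp_pos | lra]).
  exists (mkposreal _ Hd); intros s Hs Hs_lt; apply HM.
  change (Rabs (s - sigma) < Rmin (exp lam) (sigma - t1)) in Hs.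
  rewrite Rabs_left in Hs by lra.
  pose proof (Rmin_l (exp lam) (sigma - t1)); pose proof (Rmin_r (exp lam) (sigma - t1)).
  assert (Hln : ln (sigma - s) < lam) by (rewrite <- (ln_exp lam); apply ln_increasing; lra).
  specialize (Hlog s ltac:(lra)); unfold lam in Hln.
  assert (Hk : M - Hf h t1 < C / 2 * (ln (sigma - t1) - ln (sigma - s))); [|lra].
  apply Rmult_lt_reg_l with (2 / C); [apply Rdiv_lt_0_compat; lra|].
  replace (2 / C * (C / 2 * (ln (sigma - t1) - ln (sigma - s))))
    with (ln (sigma - t1) - ln (sigma - s)) by (field; lra).
  lra.
Qed.

Local Notation E := (Ef h sigma).

Lemma Ef_lt t : t < sigma -> E t = exp (- Hf h t).
Proof. intros Ht; unfold Ef; destruct (Rlt_dec t sigma); [reflexivity | lra]. Qed.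

Lemma Ef_ge t : sigma <= t -> E t = 0.
Proof. intros Ht; unfold Ef; destruct (Rlt_dec t sigma); [lra | reflexivity]. Qed.

Lemma Ef_pos t : t < sigma -> 0 < E t.
Proof. intros Ht; rewrite Ef_lt by exact Ht; apply exp_pos. Qed.

Lemma Ef_nonneg t : 0 <= E t.
Proof. destruct (Rlt_dec t sigma); [left; now apply Ef_pos | rewrite Ef_ge; lra]. Qed.

Lemma Ef_0 : E 0 = 1.
Proof. rewrite Ef_lt, Hf_0, Ropp_0 by lra; apply exp_0. Qed.

Lemma Ef_antimono x y : 0 <= x <= y -> E y <= E x.
Proof.
  intros Hxy; destruct (Rlt_dec y sigma).
  - rewrite !Ef_lt by lra; apply exp_le_compat, Ropp_le_contravar, Hf_le_compat; lra.
  - rewrite (Ef_ge y) by lra; apply Ef_nonneg.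
Qed.

Lemma Ef_le_1 t : 0 <= t -> E t <= 1.
Proof. intros Ht; rewrite <- Ef_0; apply Ef_antimono; lra. Qed.

Lemma Ef_decreasing x y : 0 <= x < y -> y <= sigma -> E y < E x.
Proof.
  intros Hxy Hy; destruct (Rlt_dec y sigma).
  - rewrite !Ef_lt by lra; apply exp_increasing, Ropp_lt_contravar, Hf_increasing; lra.
  - rewrite (Ef_ge y) by lra; apply Ef_pos; lra.
Qed.

Lemma Ef_tends_to_0 : filterlim E (at_left sigma) (locally 0).
Proof.
  apply filterlim_ext_loc with (fun t => exp (- Hf h t)).
  - exists (mkposreal _ sigma_pos); intros t _ Ht; now rewrite Ef_lt.
  - apply filterlim_comp with (Rbar_locally m_infty); [|exact is_lim_exp_m].
    apply filterlim_comp with (Rbar_locally p_infty);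
      [exact Hf_tends_to_infinity | apply (filterlim_Rbar_opp p_infty)].
Qed.

Lemma Ef_continuous_on : continuous_on (fun t => 0 <= t <= sigma) E.
Proof.
  intros t Ht; destruct (Rlt_dec t sigma) as [Hlt|Hge].
  - set (b := (t + sigma) / 2).
    assert (HE : continuous_on (fun s => 0 <= s <= b) E).
    { apply continuous_on_ext with (fun s => exp (- Hf h s)).
      { intros s Hs; rewrite Ef_lt; unfold b in *; lra. }
      apply (continuous_on_comp _ (fun _ => True) (Hf h) (fun v => exp (- v)));
        [auto | apply Hf_continuous_on; unfold b; lra|].
      apply continuous_on_forall; intros x _.
      apply (@ex_derive_continuous R_AbsRing R_NormedModule); auto_derive; auto. }
    apply (filterlim_within_continuous_on (fun s => 0 <= s <= b)); [unfold b; lra | exact HE|].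
    apply filter_imp with (2 := locally_open_interval (t - 1) b t ltac:(unfold b; lra)).
    intros; lra.
  - replace t with sigma by lra; apply filterlim_within_at_left; [intros; lra|].
    rewrite Ef_ge by lra; exact Ef_tends_to_0.
Qed.

Lemma is_derive_Ef t : 0 < t < sigma -> is_derive E t (- h t * E t).
Proof.
  intros Ht; apply is_derive_ext_loc with (fun s => exp (- Hf h s)).
  - apply filter_imp with (2 := locally_open_interval 0 sigma t Ht).
    intros s Hs; rewrite Ef_lt; lra.
  - rewrite Ef_lt by lra.
    replace (- h t * exp (- Hf h t)) with (scal (h t) (- exp (- Hf h t)))
      by (unfold scal; simpl; unfold mult; simpl; ring).
    apply (is_derive_comp (fun v => exp (- v)) (Hf h) t (- exp (- Hf h t))).
    + auto_derive; [auto | ring].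
    + now apply is_derive_Hf.
Qed.

Local Notation Psi := (psi h sigma).
Local Notation L := (Lval h sigma).

Lemma ex_RInt_Ef a b : 0 <= a <= b -> b <= sigma -> ex_RInt E a b.
Proof.
  intros Hab Hb; apply ex_RInt_continuous_on; [lra|].
  apply continuous_on_subset with (fun t => 0 <= t <= sigma); [intros; lra|].
  exact Ef_continuous_on.
Qed.

Lemma psi_0 : Psi 0 = 0.
Proof. unfold psi; rewrite RInt_point; reflexivity. Qed.

Lemma psi_sub a b : 0 <= a <= b -> b <= sigma -> Psi b - Psi a = RInt E a b.
Proof.
  intros Hab Hb; unfold psi.
  rewrite <- (@RInt_Chasles R_CompleteNormedModule E 0 a b); [|apply ex_RInt_Ef; lra..].
  change (plus (RInt E 0 a) (RInt E a b)) with (RInt E 0 a + RInt E a b); ring.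
Qed.

Lemma psi_sub_ge a b : 0 <= a <= b -> b <= sigma -> E b * (b - a) <= Psi b - Psi a.
Proof.
  intros Hab Hb; rewrite psi_sub by lra.
  apply RInt_ge_const; [lra | apply ex_RInt_Ef; lra | intros; apply Ef_antimono; lra].
Qed.

Lemma psi_le_compat a b : 0 <= a <= b -> b <= sigma -> Psi a <= Psi b.
Proof.
  intros Hab Hb; pose proof (psi_sub_ge a b Hab Hb).
  assert (0 <= E b * (b - a)) by (apply Rmult_le_pos; [apply Ef_nonneg | lra]).
  lra.
Qed.

Lemma psi_increasing a b : 0 <= a < b -> b <= sigma -> Psi a < Psi b.
Proof.
  intros Hab Hb; set (m := (a + b) / 2).
  pose proof (psi_sub_ge a m ltac:(unfold m; lra) ltac:(unfold m; lra)).
  pose proof (psi_le_compat m b ltac:(unfold m; lra) Hb).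
  pose proof (Ef_pos m ltac:(unfold m; lra)).
  assert (0 < E m * (m - a)) by (apply Rmult_lt_0_compat; [assumption | unfold m; lra]).
  lra.
Qed.

Lemma Lval_pos : 0 < L.
Proof. unfold Lval; rewrite <- psi_0; apply psi_increasing; lra. Qed.

Lemma psi_continuous_on : continuous_on (fun t => 0 <= t <= sigma) Psi.
Proof.
  apply continuous_on_RInt with 1; [intros; apply ex_RInt_Ef; lra|].
  intros t Ht; rewrite Rabs_right by (apply Rle_ge, Ef_nonneg).
  apply Ef_le_1; lra.
Qed.

Lemma is_derive_psi t : 0 < t < sigma -> is_derive Psi t (E t).
Proof.
  intros Ht; apply is_derive_RInt_inside with 0 sigma; [exact Ht| |].
  - intros y Hy; apply ex_RInt_Ef; lra.
  - apply (continuous_continuous_on (fun s => 0 <= s <= sigma)); [|exact Ef_continuous_on].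
    apply filter_imp with (2 := locally_open_interval 0 sigma t Ht); intros; lra.
Qed.

Local Notation Psi_inv := (psi_inv h sigma).

Lemma psi_inv_spec y : 0 <= y <= L -> 0 <= Psi_inv y <= sigma /\ Psi (Psi_inv y) = y.
Proof.
  intros Hy; unfold psi_inv; apply epsilon_spec.
  apply IVT_continuous_on; [lra | exact psi_continuous_on|].
  rewrite psi_0; exact Hy.
Qed.

Lemma psi_inv_psi t : 0 <= t <= sigma -> Psi_inv (Psi t) = t.
Proof.
  intros Ht.
  assert (HPt : 0 <= Psi t <= L) by (rewrite <- psi_0; split; apply psi_le_compat; lra).
  destruct (psi_inv_spec (Psi t) HPt) as [Hin Heq].
  destruct (Rtotal_order (Psi_inv (Psi t)) t) as [Hlt | [Heq' | Hgt]]; auto.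
  - pose proof (psi_increasing (Psi_inv (Psi t)) t ltac:(lra) ltac:(lra)); lra.
  - pose proof (psi_increasing t (Psi_inv (Psi t)) ltac:(lra) ltac:(lra)); lra.
Qed.

Lemma psi_inv_0 : Psi_inv 0 = 0.
Proof. rewrite <- psi_0 at 1; apply psi_inv_psi; lra. Qed.

Lemma psi_inv_L : Psi_inv L = sigma.
Proof. apply psi_inv_psi; lra. Qed.

Lemma psi_inv_increasing x y : 0 <= x < y -> y <= L -> Psi_inv x < Psi_inv y.
Proof.
  intros Hxy Hy.
  destruct (psi_inv_spec x ltac:(lra)) as [Hx Hpx].
  destruct (psi_inv_spec y ltac:(lra)) as [Hy' Hpy].
  destruct (Rlt_or_le (Psi_inv x) (Psi_inv y)) as [|Hle]; auto.
  pose proof (psi_le_compat (Psi_inv y) (Psi_inv x) ltac:(lra) ltac:(lra)); lra.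
Qed.

Lemma psi_inv_in y : 0 < y < L -> 0 < Psi_inv y < sigma.
Proof.
  intros Hy.
  pose proof (psi_inv_increasing 0 y ltac:(lra) ltac:(lra)) as H0y.
  pose proof (psi_inv_increasing y L ltac:(lra) ltac:(lra)) as HyL.
  rewrite psi_inv_0 in H0y; rewrite psi_inv_L in HyL; lra.
Qed.

Lemma psi_inv_continuous_on : continuous_on (fun y => 0 <= y <= L) Psi_inv.
Proof.
  pose proof (continuous_on_increasing_inverse Psi Psi_inv 0 sigma) as Hc.
  rewrite psi_0 in Hc; apply Hc.
  - intros x y Hx Hxy Hy; apply psi_increasing; lra.
  - exact psi_inv_spec.
Qed.

Lemma is_derive_psi_inv y : 0 < y < L -> is_derive Psi_inv y (/ E (Psi_inv y)).
Proof.
  intros Hy.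
  apply (is_derive_inverse Psi Psi_inv (y / 2) ((y + L) / 2)); [lra| | | | | |].
  - split; left; apply psi_inv_increasing; lra.
  - intros x Hx; apply psi_inv_spec; lra.
  - intros t Ht; eexists; apply is_derive_psi.
    pose proof (psi_inv_in (y / 2) ltac:(lra)); pose proof (psi_inv_in ((y + L) / 2) ltac:(lra)).
    lra.
  - apply (continuous_continuous_on (fun z => 0 <= z <= L)); [|exact psi_inv_continuous_on].
    apply filter_imp with (2 := locally_open_interval 0 L y Hy); intros; lra.
  - apply is_derive_psi, psi_inv_in, Hy.
  - apply Rgt_not_eq, Ef_pos, psi_inv_in, Hy.
Qed.

Lemma psi_inv_tends_to_sigma : filterlim Psi_inv (at_left L) (at_left sigma).
Proof.
  intros P [d Hd].
  set (t0 := Rmax 0 (sigma - d / 2)).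
  assert (Ht0 : 0 <= t0 < sigma /\ sigma - d / 2 <= t0).
  { pose proof (cond_pos d).
    pose proof (Rmax_l 0 (sigma - d / 2)); pose proof (Rmax_r 0 (sigma - d / 2)).
    split; [split; [auto | apply Rmax_lub_lt; lra] | auto]. }
  assert (Hr : 0 < L - Psi t0)
    by (pose proof (psi_increasing t0 sigma ltac:(lra) ltac:(lra)); unfold Lval; lra).
  exists (mkposreal _ Hr); intros y Hy HyL.
  change (Rabs (y - L) < L - Psi t0) in Hy; apply Rabs_def2 in Hy.
  assert (Hy0 : 0 <= Psi t0) by (rewrite <- psi_0; apply psi_le_compat; lra).
  pose proof (psi_inv_increasing (Psi t0) y ltac:(lra) ltac:(lra)) as Hlt.
  rewrite psi_inv_psi in Hlt by lra.
  pose proof (psi_inv_in y ltac:(lra)) as Hin.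
  apply Hd; [change (Rabs (Psi_inv y - sigma) < d); rewrite Rabs_left; lra | lra].
Qed.

Local Notation g := (gf h sigma).

Lemma gf_0 : g 0 = 1.
Proof. unfold gf; rewrite psi_inv_0; exact Ef_0. Qed.

Lemma gf_L : g L = 0.
Proof. unfold gf; rewrite psi_inv_L; apply Ef_ge; lra. Qed.

Lemma gf_decreasing x y : 0 <= x < y -> y <= L -> g y < g x.
Proof.
  intros Hxy Hy; unfold gf.
  destruct (psi_inv_spec x ltac:(lra)) as [Hx _]; destruct (psi_inv_spec y ltac:(lra)) as [Hy' _].
  apply Ef_decreasing; [split; [lra | now apply psi_inv_increasing] | lra].
Qed.

Lemma gf_antimono x y : 0 <= x <= y -> y <= L -> g y <= g x.
Proof.
  intros Hxy Hy; destruct (Req_dec x y) as [->|]; [lra|].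
  left; apply gf_decreasing; lra.
Qed.

Lemma gf_nonneg y : 0 <= g y.
Proof. apply Ef_nonneg. Qed.

Lemma gf_le_1 y : 0 <= y <= L -> g y <= 1.
Proof. intros Hy; rewrite <- gf_0; apply gf_antimono; lra. Qed.

Lemma gf_pos y : 0 <= y < L -> 0 < g y.
Proof. intros Hy; rewrite <- gf_L; apply gf_decreasing; lra. Qed.

Lemma gf_continuous_on : continuous_on (fun y => 0 <= y <= L) g.
Proof.
  apply (continuous_on_comp _ (fun t => 0 <= t <= sigma) Psi_inv E).
  - intros y Hy; now apply psi_inv_spec.
  - exact psi_inv_continuous_on.
  - exact Ef_continuous_on.
Qed.

Lemma ex_RInt_gf a b : 0 <= a <= b -> b <= L -> ex_RInt g a b.
Proof.
  intros Hab Hb; apply ex_RInt_continuous_on; [lra|].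
  apply continuous_on_subset with (fun y => 0 <= y <= L); [intros; lra|].
  exact gf_continuous_on.
Qed.

Lemma is_derive_gf y : 0 < y < L -> is_derive g y (- h (Psi_inv y)).
Proof.
  intros Hy; pose proof (psi_inv_in y Hy) as Hin.
  pose proof (Ef_pos (Psi_inv y) ltac:(lra)) as HE.
  replace (- h (Psi_inv y)) with (scal (/ E (Psi_inv y)) (- h (Psi_inv y) * E (Psi_inv y)))
    by (unfold scal; simpl; unfold mult; simpl; field; lra).
  apply (is_derive_comp E Psi_inv y); [apply is_derive_Ef; lra | now apply is_derive_psi_inv].
Qed.

Lemma Derive_gf_tends_to_minus_infinity :
  filterlim (Derive g) (at_left L) (Rbar_locally m_infty).
Proof.
  apply filterlim_ext_loc with (fun y => - h (Psi_inv y)).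
  - exists (mkposreal _ Lval_pos); intros y Hy HyL.
    change (Rabs (y - L) < L) in Hy; apply Rabs_def2 in Hy.
    symmetry; apply is_derive_unique, is_derive_gf; lra.
  - apply filterlim_comp with (Rbar_locally p_infty); [|apply (filterlim_Rbar_opp p_infty)].
    apply filterlim_comp with (at_left sigma); [exact psi_inv_tends_to_sigma | exact h_blow].
Qed.

Local Notation tail t := (RInt g t L).

Lemma tail_split x t : 0 <= x <= t -> t <= L -> tail x = RInt g x t + tail t.
Proof.
  intros Hxt Ht.
  rewrite <- (@RInt_Chasles R_CompleteNormedModule g x t L);
    [reflexivity | apply ex_RInt_gf; lra..].
Qed.

Lemma tail_pos t : 0 <= t < L -> 0 < tail t.
Proof.
  intros Ht; set (m := (t + L) / 2).
  rewrite (tail_split t m) by (unfold m; lra).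
  assert (Hm : g m * (m - t) <= RInt g t m).
  { apply RInt_ge_const; [unfold m; lra | apply ex_RInt_gf; unfold m; lra|].
    intros x Hx; apply gf_antimono; unfold m in *; lra. }
  assert (0 <= tail m)
    by (apply RInt_ge_0; [unfold m; lra | apply ex_RInt_gf; unfold m; lra |
                          intros; apply gf_nonneg]).
  assert (0 < g m * (m - t)) by (apply Rmult_lt_0_compat; [apply gf_pos | ]; unfold m; lra).
  lra.
Qed.

Lemma inv_sqrt_tail_continuous_on :
  continuous_on (fun t => 0 <= t < L) (fun t => / sqrt (tail t)).
Proof.
  assert (Htail : continuous_on (fun t => 0 <= t <= L) (fun t => tail 0 - RInt g 0 t)).
  { apply (continuous_on_comp _ (fun _ => True) (fun t => RInt g 0 t) (fun v => tail 0 - v));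
      [auto| |].
    - apply continuous_on_RInt with 1; [intros; apply ex_RInt_gf; lra|].
      intros t Ht; rewrite Rabs_right by (apply Rle_ge, gf_nonneg); now apply gf_le_1.
    - apply continuous_on_forall; intros v _.
      apply (@ex_derive_continuous R_AbsRing R_NormedModule); auto_derive; auto. }
  apply (continuous_on_comp _ (fun v => 0 < v) (fun t => tail t) (fun v => / sqrt v)).
  - intros t Ht; now apply tail_pos.
  - apply continuous_on_subset with (fun t => 0 <= t <= L); [intros; lra|].
    apply continuous_on_ext with (2 := Htail); intros t Ht.
    rewrite (tail_split 0 t) by lra; apply Rplus_minus_l.
  - apply continuous_on_forall; intros v Hv.
    apply continuous_Rinv_comp; [apply continuous_sqrt|].
    apply Rgt_not_eq, sqrt_lt_R0, Hv.
Qed.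

Lemma ex_RInt_inv_sqrt_tail a b :
  0 <= a <= b -> b < L -> ex_RInt (fun t => / sqrt (tail t)) a b.
Proof.
  intros Hab Hb; apply ex_RInt_continuous_on; [lra|].
  apply continuous_on_subset with (fun t => 0 <= t < L); [intros; lra|].
  exact inv_sqrt_tail_continuous_on.
Qed.

Lemma tail_psi_ge tau d : 0 <= tau -> 0 <= d -> tau + d < sigma ->
  d * E (tau + d) ^ 2 <= tail (Psi tau).
Proof.
  intros Htau Hd Hsum.
  assert (Hlt : Psi (tau + d) < L) by (apply psi_increasing; lra).
  assert (Hle : Psi tau <= Psi (tau + d)) by (apply psi_le_compat; lra).
  assert (H0 : 0 <= Psi tau) by (rewrite <- psi_0; apply psi_le_compat; lra).
  assert (Hg : g (Psi (tau + d)) = E (tau + d)) by (unfold gf; rewrite psi_inv_psi; lra).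
  pose proof (psi_sub_ge tau (tau + d) ltac:(lra) ltac:(lra)) as Hstep.
  replace (tau + d - tau) with d in Hstep by ring.
  rewrite (tail_split (Psi tau) (Psi (tau + d))) by lra.
  assert (Hex : g (Psi (tau + d)) * (Psi (tau + d) - Psi tau) <= RInt g (Psi tau) (Psi (tau + d))).
  { apply RInt_ge_const; [lra | apply ex_RInt_gf; lra | intros x Hx; apply gf_antimono; lra]. }
  assert (0 <= tail (Psi (tau + d)))
    by (apply RInt_ge_0; [lra | apply ex_RInt_gf; lra | intros; apply gf_nonneg]).
  rewrite Hg in Hex; pose proof (Ef_nonneg (tau + d)).
  assert (E (tau + d) * (E (tau + d) * d) <= E (tau + d) * (Psi (tau + d) - Psi tau))
    by (apply Rmult_le_compat_l; lra).
  nra.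
Qed.

(* [c <= 1/2] keeps the step [c (sigma - tau)^gamma] below [(sigma - tau)/2], and
   [c <= 1/(8C)] makes [H] grow by at most 1 along it. *)
Definition step_coef : R := Rmin (1 / 2) (/ (8 * C)).

Lemma step_coef_pos : 0 < step_coef.
Proof. apply Rmin_pos; [lra | apply Rinv_0_lt_compat; lra]. Qed.

Lemma h_le_near_sigma : exists t1, 0 < t1 < sigma /\ sigma - t1 <= 1 /\
  forall tau s, tau <= s -> t1 <= s < sigma -> sigma - tau <= 2 * (sigma - s) ->
  h s <= 8 * C / Rpower (sigma - tau) gamma.
Proof.
  destruct h_asymp_bounds as [t1 [Ht1 [Ht1_1 Hbounds]]].
  exists t1; split; [exact Ht1 | split; [exact Ht1_1|]]; intros tau s Hts Hs Hdist.
  destruct (Hbounds s Hs) as [_ Hup].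
  assert (Hps : 0 < Rpower (sigma - s) gamma) by apply exp_pos.
  assert (Hpt : 0 < Rpower (sigma - tau) gamma) by apply exp_pos.
  assert (Hq : Rpower (sigma - tau) gamma <= 4 * Rpower (sigma - s) gamma).
  { apply Rle_trans with (Rpower (2 * (sigma - s)) gamma).
    - apply Rle_Rpower_l; lra.
    - apply Rpower_double_le; lra. }
  apply Rmult_le_reg_l with (Rpower (sigma - s) gamma * Rpower (sigma - tau) gamma);
    [now apply Rmult_lt_0_compat|].
  replace (Rpower (sigma - s) gamma * Rpower (sigma - tau) gamma *
           (8 * C / Rpower (sigma - tau) gamma))
    with (8 * C * Rpower (sigma - s) gamma) by (field; lra).
  nra.
Qed.

Lemma Hf_step_le_1 : exists t1, 0 < t1 < sigma /\ forall tau, t1 <= tau < sigma ->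
  tau + step_coef * Rpower (sigma - tau) gamma < sigma /\
  Hf h (tau + step_coef * Rpower (sigma - tau) gamma) - Hf h tau <= 1.
Proof.
  destruct h_le_near_sigma as [t1 [Ht1 [Ht1_1 Hh]]].
  exists t1; split; [exact Ht1|]; intros tau Htau.
  set (p := Rpower (sigma - tau) gamma); set (d := step_coef * p).
  assert (Hp : 0 < p) by apply exp_pos.
  assert (Hpu : p <= sigma - tau) by (apply Rpower_le_base; lra).
  pose proof step_coef_pos as Hc.
  assert (Hc2 : step_coef <= 1 / 2) by apply Rmin_l.
  assert (Hc8 : step_coef <= / (8 * C)) by apply Rmin_r.
  assert (Hd : 0 < d <= (sigma - tau) / 2) by (unfold d; split; [apply Rmult_lt_0_compat|]; nra).
  split; [lra|].
  rewrite Hf_sub by lra.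
  apply Rle_trans with (8 * C / p * (tau + d - tau)).
  - apply RInt_le_const; [lra | apply ex_RInt_h; lra|].
    intros x Hx; apply Rle_trans with (h (tau + d)); [apply h_le_compat; lra|].
    apply Hh; lra.
  - replace (8 * C / p * (tau + d - tau)) with (8 * C * step_coef) by (unfold d; field; lra).
    apply Rmult_le_reg_l with (/ (8 * C)); [apply Rinv_0_lt_compat; lra|].
    rewrite <- Rmult_assoc, Rinv_l, Rmult_1_l, Rmult_1_r by lra; exact Hc8.
Qed.

Lemma inv_sqrt_tail_psi_le : exists t1, 0 < t1 < sigma /\ forall tau, t1 <= tau < sigma ->
  / sqrt (tail (Psi tau)) <=
  exp 1 / sqrt step_coef * (Rpower (sigma - tau) (- (gamma / 2)) / E tau).
Proof.
  destruct Hf_step_le_1 as [t1 [Ht1 Hstep]].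
  exists t1; split; [exact Ht1|]; intros tau Htau.
  destruct (Hstep tau Htau) as [Hlt Hgrowth].
  set (p := Rpower (sigma - tau) gamma) in *; set (d := step_coef * p) in *.
  assert (Hp : 0 < p) by apply exp_pos.
  pose proof step_coef_pos as Hc.
  assert (Hd : 0 < d) by (unfold d; nra).
  set (A := E tau * exp (-1)).
  assert (HE : 0 < E tau) by (apply Ef_pos; lra).
  assert (HA : 0 < A) by (unfold A; apply Rmult_lt_0_compat; [exact HE | apply exp_pos]).
  assert (HAE : A <= E (tau + d)).
  { unfold A; rewrite !Ef_lt by lra; rewrite <- exp_plus; apply exp_le_compat; lra. }
  assert (Htail : d * A ^ 2 <= tail (Psi tau)).
  { apply Rle_trans with (d * E (tau + d) ^ 2); [|apply tail_psi_ge; lra].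
    apply Rmult_le_compat_l; [lra|]; apply pow_incr; lra. }
  assert (Hsqrt : sqrt (d * A ^ 2) = sqrt step_coef * sqrt p * A).
  { unfold d; rewrite !sqrt_mult, sqrt_pow2 by (try apply pow2_ge_0; nra); reflexivity. }
  assert (Hpow : Rpower (sigma - tau) (- (gamma / 2)) = / sqrt p).
  { rewrite Rpower_Ropp; f_equal; unfold p; rewrite <- Rpower_sqrt by apply exp_pos.
    rewrite Rpower_mult; f_equal; field. }
  assert (Hsc : 0 < sqrt step_coef) by (apply sqrt_lt_R0, Hc).
  assert (Hsp : 0 < sqrt p) by (apply sqrt_lt_R0, Hp).
  apply Rle_trans with (/ sqrt (d * A ^ 2)).
  - apply Rinv_le_contravar;
      [rewrite Hsqrt; apply Rmult_lt_0_compat; [apply Rmult_lt_0_compat|]; lra|].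
    apply sqrt_le_1_alt, Htail.
  - rewrite Hsqrt, Hpow; unfold A.
    replace (exp (-1)) with (/ exp 1) by (rewrite <- exp_Ropp; f_equal; lra).
    pose proof (exp_pos 1); right; field; repeat split; lra.
Qed.

(* Bounded on [[0, L)] because [1 - gamma/2 > 0]: this is where [gamma < 2] is used. *)
Definition tail_majorant_primitive (t : R) : R :=
  - Rpower (sigma - Psi_inv t) (1 - gamma / 2) / (1 - gamma / 2).

Lemma is_derive_tail_majorant_primitive t : 0 < t < L ->
  is_derive tail_majorant_primitive t
    (Rpower (sigma - Psi_inv t) (- (gamma / 2)) / E (Psi_inv t)).
Proof.
  intros Ht; pose proof (psi_inv_in t Ht) as Hin.
  assert (HE : 0 < E (Psi_inv t)) by (apply Ef_pos; lra).
  assert (Hpow : is_derive (fun w => Rpower w (1 - gamma / 2)) (sigma - Psi_inv t)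
    ((1 - gamma / 2) * Rpower (sigma - Psi_inv t) (1 - gamma / 2 - 1))).
  { apply is_derive_Reals, derivable_pt_lim_power; lra. }
  assert (Hlin : is_derive (fun v => sigma - v) (Psi_inv t) (-1)) by (auto_derive; [auto | ring]).
  pose proof (is_derive_comp _ _ _ _ _ (is_derive_comp _ _ _ _ _ Hpow Hlin)
    (is_derive_psi_inv t Ht)) as Hcomp.
  pose proof (is_derive_scal _ _ (- / (1 - gamma / 2)) _ Hcomp) as Hscal.
  replace (Rpower (sigma - Psi_inv t) (- (gamma / 2)) / E (Psi_inv t))
    with (- / (1 - gamma / 2) * scal (/ E (Psi_inv t))
      (scal (-1) ((1 - gamma / 2) * Rpower (sigma - Psi_inv t) (1 - gamma / 2 - 1)))).
  - eapply is_derive_ext; [|exact Hscal].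
    intros v; unfold tail_majorant_primitive, scal; simpl; unfold mult; simpl; field; lra.
  - unfold scal; simpl; unfold mult; simpl.
    replace (1 - gamma / 2 - 1) with (- (gamma / 2)) by ring.
    field; lra.
Qed.

Lemma tail_majorant_primitive_nonpos t : tail_majorant_primitive t <= 0.
Proof.
  unfold tail_majorant_primitive.
  assert (0 < Rpower (sigma - Psi_inv t) (1 - gamma / 2)) by apply exp_pos.
  assert (0 < 1 - gamma / 2) by lra.
  assert (0 < Rpower (sigma - Psi_inv t) (1 - gamma / 2) / (1 - gamma / 2))
    by (apply Rdiv_lt_0_compat; assumption).
  lra.
Qed.

Lemma inv_sqrt_tail_le_majorant : exists t0, 0 < t0 < L /\ forall t, t0 <= t < L ->
  / sqrt (tail t) <= exp 1 / sqrt step_coef *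
    (Rpower (sigma - Psi_inv t) (- (gamma / 2)) / E (Psi_inv t)).
Proof.
  destruct inv_sqrt_tail_psi_le as [t1 [Ht1 Hbound]].
  assert (Ht0 : 0 < Psi t1 < L) by (rewrite <- psi_0; split; apply psi_increasing; lra).
  exists (Psi t1); split; [exact Ht0|].
  intros t Ht; destruct (psi_inv_spec t ltac:(lra)) as [Hin Hpt].
  assert (Htau : t1 <= Psi_inv t).
  { destruct (Rlt_or_le (Psi_inv t) t1) as [Hlt|]; [|assumption].
    pose proof (psi_increasing (Psi_inv t) t1 ltac:(lra) ltac:(lra)); lra. }
  rewrite <- Hpt at 1; apply Hbound.
  split; [exact Htau | apply psi_inv_in; lra].
Qed.

Lemma inv_sqrt_tail_pos t : 0 <= t < L -> 0 < / sqrt (tail t).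
Proof. intros Ht; apply Rinv_0_lt_compat, sqrt_lt_R0, tail_pos, Ht. Qed.

Lemma RInt_inv_sqrt_tail_bounded : exists M, forall x, 0 <= x < L ->
  RInt (fun t => / sqrt (tail t)) 0 x <= M.
Proof.
  destruct inv_sqrt_tail_le_majorant as [t0 [Ht0 Hbound]].
  set (phi := fun t => / sqrt (tail t)); set (K := exp 1 / sqrt step_coef).
  assert (HK : 0 < K)
    by (apply Rdiv_lt_0_compat; [apply exp_pos | apply sqrt_lt_R0, step_coef_pos]).
  exists (RInt phi 0 t0 - K * tail_majorant_primitive t0); intros x Hx.
  pose proof (tail_majorant_primitive_nonpos x); pose proof (tail_majorant_primitive_nonpos t0).
  destruct (Rle_or_lt x t0) as [Hxt0|Ht0x].
  - rewrite <- (@RInt_Chasles R_CompleteNormedModule phi 0 x t0);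
      [|apply ex_RInt_inv_sqrt_tail; lra..].
    change (plus (RInt phi 0 x) (RInt phi x t0)) with (RInt phi 0 x + RInt phi x t0).
    assert (0 <= RInt phi x t0); [|nra].
    apply RInt_ge_0; [lra | apply ex_RInt_inv_sqrt_tail; lra|].
    intros t Ht; left; apply inv_sqrt_tail_pos; lra.
  - rewrite <- (@RInt_Chasles R_CompleteNormedModule phi 0 t0 x);
      [|apply ex_RInt_inv_sqrt_tail; lra..].
    change (plus (RInt phi 0 t0) (RInt phi t0 x)) with (RInt phi 0 t0 + RInt phi t0 x).
    assert (RInt phi t0 x <= K * tail_majorant_primitive x - K * tail_majorant_primitive t0);
      [|nra].
    apply (RInt_le_of_is_derive phi (fun t => K * tail_majorant_primitive t)
      (fun t => K * (Rpower (sigma - Psi_inv t) (- (gamma / 2)) / E (Psi_inv t))) 0 L);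
      try lra.
    + intros t Ht; apply (continuous_continuous_on (fun s => 0 <= s < L));
        [|exact inv_sqrt_tail_continuous_on].
      apply filter_imp with (2 := locally_open_interval 0 L t Ht); intros; lra.
    + intros t Ht; exact (is_derive_scal _ _ K _ (is_derive_tail_majorant_primitive t Ht)).
    + intros t Ht; apply Hbound; lra.
Qed.

Lemma ex_RInt_gen_inv_sqrt_tail :
  ex_RInt_gen (fun t => / sqrt (tail t)) (at_point 0) (at_left L).
Proof.
  destruct RInt_inv_sqrt_tail_bounded as [M HM].
  apply ex_RInt_gen_at_left_of_bounded with M; [exact Lval_pos | | | exact HM].
  - intros x Hx; apply ex_RInt_inv_sqrt_tail; lra.
  - intros x Hx; left; apply inv_sqrt_tail_pos, Hx.
Qed.

End Profile.

Theorem lemma4p1 (sigma : R) (h : R -> R) (gamma C : R)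
  (Hsigma : 0 < sigma)
  (Hpos : forall s, 0 <= s < sigma -> 0 <= h s)
  (Hcont0 : filterlim h (at_right 0) (locally (h 0)))
  (Hcont : forall s, 0 < s < sigma -> continuous h s)
  (Hincr : forall s t, 0 <= s -> s < t -> t < sigma -> h s < h t)
  (Hblow : filterlim h (at_left sigma) (Rbar_locally p_infty))
  (Hgamma : 1 <= gamma < 2)
  (HC : 0 < C)
  (Hasym : filterlim (fun s => Rpower (sigma - s) gamma * h s)
                     (at_left sigma) (locally C)) :
  let L := Lval h sigma in
  let g := gf h sigma in
  (* (i) *)
  (g 0 = 1 /\ g L = 0) /\
  (* (ii) g is decreasing on [0, L] *)
  (forall x y, 0 <= x -> x < y -> y <= L -> g y < g x) /\
  (* (iii) g is differentiable near L^- and g'(s) -> -oo as s -> L^- *)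
  ((exists eps, 0 < eps /\ forall s, L - eps < s < L -> ex_derive g s) /\
   filterlim (Derive g) (at_left L) (Rbar_locally m_infty)) /\
  (* (iv) the improper integral int_0^L dt / sqrt(int_t^L g) converges *)
  ex_RInt_gen (fun t => / sqrt (RInt g t L)) (at_point 0) (at_left L).
Proof.
  cbv zeta; split; [split | split; [| split; [split |]]].
  - eapply gf_0; eauto.
  - eapply gf_L; eauto.
  - intros x y Hx Hxy Hy; eapply gf_decreasing; eauto.
  - exists (Lval h sigma); split; [eapply Lval_pos; eauto|].
    intros s Hs; eexists; eapply is_derive_gf; eauto; lra.
  - eapply Derive_gf_tends_to_minus_infinity; eauto.
  - eapply ex_RInt_gen_inv_sqrt_tail; eauto.
Qed.
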